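(* Let $p,q$ be odd primes with $q-p=2$, let $\varepsilon\in\{1,-1\}$, let $D=D_1\cdots D_n$ ($n\ge 0$) be a product of distinct odd primes with $\gcd(pq,D)=1$, and let $E_D/\mathbb{Q}$ be the elliptic curve $y^2=x(x+\varepsilon pD)(x+\varepsilon qD)$. For a prime $l$ let $\widetilde{E}_l$ be the reduction modulo $l$ of this equation and $a_l=l+1-\#\widetilde{E}_l(\mathbb{F}_l)$. Then: (1) if $3\nmid pqD$, then $\#\widetilde{E}_3(\mathbb{F}_3)=4$ and $a_3=0$; (2) if $7\nmid pqD$ and $p\equiv2,3,6\pmod7$, then $\#\widetilde{E}_7(\mathbb{F}_7)=8$ and $a_7=0$; (3) assume $5\nmid pqD$: (3a) if $p\equiv1,2\pmod5$, then $\#\widetilde{E}_5(\mathbb{F}_5)=4$, $a_5=2$ when $D\equiv1,4\pmod5$, and $\#\widetilde{E}_5(\mathbb{F}_5)=8$, $a_5=-2$ when $D\equiv2,3\pmod5$; (3b) if $p\equiv4\pmod5$, then $\#\widetilde{E}_5(\mathbb{F}_5)=8$, $a_5=-2$ when $D\equiv1,4\pmod5$, and $\#\widetilde{E}_5(\mathbb{F}_5)=4$, $a_5=2$ when $D\equiv2,3\pmod5$; (4) assume $7\nmid pqD$: (4a) if ($\varepsilon=1$ and $p\equiv1\pmod7$) or ($\varepsilon=-1$ and $p\equiv4\pmod7$), then $\#\widetilde{E}_7(\mathbb{F}_7)=12$, $a_7=-4$ when $D\equiv1,2,4\pmod7$, and $\#\widetilde{E}_7(\mathbb{F}_7)=4$,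 $a_7=4$ when $D\equiv3,5,6\pmod7$; (4b) if ($\varepsilon=1$ and $p\equiv4\pmod7$) or ($\varepsilon=-1$ and $p\equiv1\pmod7$), then $\#\widetilde{E}_7(\mathbb{F}_7)=4$, $a_7=4$ when $D\equiv1,2,4\pmod7$, and $\#\widetilde{E}_7(\mathbb{F}_7)=12$, $a_7=-4$ when $D\equiv3,5,6\pmod7$; (5) $\#\widetilde{E}_2(\mathbb{F}_2)=3$; $\#\widetilde{E}_{D_i}(\mathbb{F}_{D_i})=D_i+1$ for $i=1,\dots,n$; $\#\widetilde{E}_p(\mathbb{F}_p)=p$ if $(\frac{2\varepsilon D}{p})=1$ and $=p+2$ if $(\frac{2\varepsilon D}{p})=-1$; $\#\widetilde{E}_q(\mathbb{F}_q)=q$ if $(\frac{-2\varepsilon D}{q})=1$ and $=q+2$ if $(\frac{-2\varepsilon D}{q})=-1$.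
   Context: $\widetilde{E}_l$ denotes the projective plane cubic over $\mathbb{F}_l$ obtained by reducing the given Weierstrass equation modulo $l$; $\#\widetilde{E}_l(\mathbb{F}_l)$ counts all of its $\mathbb{F}_l$-points (including the point at infinity and, in the case of bad reduction, the singular point). $(\frac{\cdot}{\cdot})$ is the Legendre symbol. *)

From HB Require Import structures.
From mathcomp Require Import all_boot all_order all_algebra.
Set Implicit Arguments. Unset Strict Implicit. Unset Printing Implicit Defensive.
Import Order.TTheory GRing.Theory Num.Theory.
Local Open Scope ring_scope.

(* Number of F_l-points of the projective plane cubic
   Y^2 Z = X (X + a Z) (X + b Z) reduced mod l (l prime):
   nonzero solutions in F_l^3 counted up to the (l-1) nonzero scalars. *)
Definition Ecount (l : nat) (a b : int) : nat :=
  (#|[set v : 'F_l * 'F_l * 'F_l |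
      ((v != (0, 0, 0)) &&
       (v.1.2 ^+ 2 * v.2 ==
        v.1.1 * (v.1.1 + a%:~R * v.2) * (v.1.1 + b%:~R * v.2)))%R]| %/ l.-1)%N.

Definition atrace (l : nat) (a b : int) : int :=
  (l%:Z + 1 - (Ecount l a b)%:Z)%R.

Definition legendre (a : int) (p : nat) : int :=
  let x : 'F_p := a%:~R in
  if x == 0 then 0 else if [exists y : 'F_p, y ^+ 2 == x] then 1 else -1.

(* For a prime l not dividing pqD the reduced curve, hence its point count,
   only depends on eps and on p and D modulo l, so for l = 2, 3, 5, 7 finitely
   many cases remain and they are computed.  At l | D the reduction is the
   cusp y^2 = x^3, at l = p and l = q it is the node y^2 = x^2 (x + c) with
   c = 2 eps D, resp. c = -2 eps D (as p = -2 mod q).  The affine points of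
   the node other than (0,0) are parametrized by the slope t = y/x through
   x = t^2 - c, every t occurring except the square roots of c; so there are
   l projective points if c is a nonzero square and l + 2 if it is not a
   square, while the cusp has l + 1. *)

From mathcomp Require Import all_boot all_order all_algebra.
From mathcomp Require Import ring.
Set Implicit Arguments. Unset Strict Implicit. Unset Printing Implicit Defensive.
Import Order.TTheory GRing.Theory Num.Theory.
Local Open Scope ring_scope.

Section FiniteFieldCurves.

Variable F : finFieldType.
Implicit Types A B c : F.

Definition affine_curve A B : {set F * F} :=
  [set v | v.2 ^+ 2 == v.1 * (v.1 + A) * (v.1 + B)].

Definition projective_curve A B : {set F * F * F} :=
  [set v | (v != (0, 0, 0)) &&
     (v.1.2 ^+ 2 * v.2 == v.1.1 * (v.1.1 + A * v.2) * (v.1.1 + B * v.2))].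

Lemma curve_eq_scale A B x y z : z != 0 ->
  ((y * z) ^+ 2 * z == (x * z) * (x * z + A * z) * (x * z + B * z)) =
  (y ^+ 2 == x * (x + A) * (x + B)).
Proof.
move=> z_neq0; rewrite -subr_eq0 -[RHS]subr_eq0.
have -> : (y * z) ^+ 2 * z - x * z * (x * z + A * z) * (x * z + B * z)
   = z ^+ 3 * (y ^+ 2 - x * (x + A) * (x + B)) by ring.
by rewrite mulf_eq0 expf_eq0 /= (negPf z_neq0).
Qed.

Lemma projective_curve_at_infinity A B :
  projective_curve A B :&: [set v | v.2 == 0] = (fun y => (0, y, 0)) @: [set~ 0].
Proof.
apply/setP => -[[x y] z]; rewrite !inE /=; apply/andP/imsetP.
- move=> [/andP[nz /eqP E] /eqP z0]; subst z.
  move: E; rewrite !mulr0 !addr0 => /esym/eqP; rewrite !mulf_eq0 !orbb => /eqP x0.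
  by subst x; exists y => //; rewrite !inE; apply: contra nz => /eqP ->.
- case=> y'; rewrite !inE => y'_neq0 [-> -> ->].
  rewrite !mulr0 !mul0r eqxx andbT; split=> //.
  by apply: contra y'_neq0 => /eqP [] ->.
Qed.

Lemma projective_curve_finite A B :
  projective_curve A B :\: [set v | v.2 == 0] =
  (fun w => (w.2.1 * w.1, w.2.2 * w.1, w.1)) @: setX [set~ 0] (affine_curve A B).
Proof.
apply/setP => -[[x y] z]; rewrite !inE /=; apply/andP/imsetP.
- move=> [z_neq0 /andP[_ E]]; exists (z, (x / z, y / z)); last by rewrite /= !divfK.
  by rewrite !inE /= z_neq0 -(curve_eq_scale _ _ _ _ z_neq0) !divfK.
- case=> -[z' [x' y']]; rewrite !inE /= => /andP[z'_neq0 E] [-> -> ->].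
  rewrite curve_eq_scale // E andbT; split=> //.
  by apply: contra z'_neq0 => /eqP [] _ _ ->.
Qed.

Lemma card_projective_curve A B :
  #|projective_curve A B| = (#|F|.-1 * #|affine_curve A B|.+1)%N.
Proof.
rewrite -(cardsID [set v | v.2 == 0]) projective_curve_at_infinity.
rewrite projective_curve_finite card_imset; last by move=> y1 y2 [].
rewrite card_in_imset; first by rewrite cardsX cardsC1 mulnS addnC.
move=> [z1 [x1 y1]] [z2 [x2 y2]]; rewrite !inE /= => /andP[z1_neq0 _] _ [ex ey ez].
by subst z2; rewrite (mulIf z1_neq0 ex) (mulIf z1_neq0 ey).
Qed.

Lemma card_affine_curve_enum A B (s : seq F) : uniq s -> (forall x, x \in s) ->
  #|affine_curve A B| =
  count (fun v => v.2 ^+ 2 == v.1 * (v.1 + A) * (v.1 + B))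
    [seq (x, y) | x <- s, y <- s].
Proof.
move=> s_uniq s_full; set ss := [seq (x, y) | x <- s, y <- s].
have ss_uniq : uniq ss by apply: allpairs_uniq => // -[? ?] [? ?] _ _.
have ss_full v : v \in ss by case: v => x y; apply: allpairs_f.
rewrite cardE -size_filter; apply: perm_size; apply: uniq_perm.
- exact: enum_uniq.
- exact: filter_uniq.
by move=> v; rewrite mem_enum mem_filter ss_full andbT inE.
Qed.

Lemma card_nodal_curve c : #|affine_curve 0 c| = #|[set t : F | t ^+ 2 != c]|.+1.
Proof.
rewrite -(cardsID [set v | v.1 == 0]) -add1n.
have -> : affine_curve 0 c :&: [set v | v.1 == 0] = [set (0, 0)].
  apply/setP => -[x y]; rewrite !inE /= addr0 xpair_eqE.
  by case: (x =P 0) => [->|]; rewrite ?andbF // !mul0r expf_eq0 andbT.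
rewrite cards1; congr (_ + _)%N.
pose g t : F * F := (t ^+ 2 - c, t * (t ^+ 2 - c)).
have -> : affine_curve 0 c :\: [set v | v.1 == 0] = g @: [set t | t ^+ 2 != c].
  apply/setP => -[x y]; rewrite !inE /= addr0; apply/andP/imsetP.
  - move=> [x_neq0 /eqP E]; have tE : (y / x) ^+ 2 - c = x.
      by rewrite expr_div_n E; field.
    exists (y / x); first by rewrite inE -subr_eq0 tE.
    by rewrite /g tE divfK.
  - case=> t; rewrite inE -subr_eq0 => t_neq [-> ->]; split => //.
    by rewrite subrK; apply/eqP; ring.
rewrite card_in_imset // => t1 t2; rewrite !inE -subr_eq0 => t1_neq _ [E1 E2].
by move: E2; rewrite -E1 => /(mulIf t1_neq).
Qed.

Lemma card_sqr_neq c :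
  #|[set t : F | t ^+ 2 != c]| = (#|F| - #|[set t : F | t ^+ 2 == c]|)%N.
Proof.
rewrite -(cardsC [set t : F | t ^+ 2 == c]) addKn.
by apply: eq_card => t; rewrite !inE.
Qed.

Lemma card_sqrt0 : #|[set t : F | t ^+ 2 == 0]| = 1%N.
Proof.
rewrite -(cards1 (0 : F)); apply: eq_card => t.
by rewrite !inE expf_eq0.
Qed.

Lemma card_sqrt_nonsquare c :
  ~~ [exists t, t ^+ 2 == c] -> #|[set t : F | t ^+ 2 == c]| = 0%N.
Proof.
move=> nonsq; apply: eq_card0 => t; rewrite inE.
by apply: contraNF nonsq => sq; apply/existsP; exists t.
Qed.

Lemma card_sqrt_square c : 2%:R != 0 :> F -> c != 0 ->
  [exists t, t ^+ 2 == c] -> #|[set t : F | t ^+ 2 == c]| = 2%N.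
Proof.
move=> two_neq0 c_neq0 /existsP[s /eqP sE].
have -> : [set t : F | t ^+ 2 == c] = [set s; - s].
  by apply/setP => t; rewrite !inE -sE eqf_sqr.
rewrite cards2; case: eqP => // sN; case/eqP: c_neq0.
have : s * 2%:R = 0 by rewrite mulr_natr mulr2n {1}sN addNr.
by move/eqP; rewrite mulf_eq0 (negPf two_neq0) orbF -sE => /eqP ->; rewrite expr0n.
Qed.

Lemma card_cuspidal_curve : #|affine_curve 0 0| = #|F|.
Proof.
rewrite card_nodal_curve card_sqr_neq card_sqrt0 subn1 prednK //.
by apply/card_gt0P; exists 0.
Qed.

Lemma card_nodal_curve_square c : 2%:R != 0 :> F -> c != 0 ->
  [exists t, t ^+ 2 == c] -> #|affine_curve 0 c| = #|F|.-1.
Proof.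
move=> two_neq0 c_neq0 sq; have := card_sqrt_square two_neq0 c_neq0 sq.
rewrite card_nodal_curve card_sqr_neq => ->.
have F_ge2 : (2 <= #|F|)%N by rewrite -(card_sqrt_square two_neq0 c_neq0 sq) max_card.
by rewrite -subSn // subSS subn1.
Qed.

Lemma card_nodal_curve_nonsquare c :
  ~~ [exists t, t ^+ 2 == c] -> #|affine_curve 0 c| = #|F|.+1.
Proof. by move=> nonsq; rewrite card_nodal_curve card_sqr_neq card_sqrt_nonsquare ?subn0. Qed.

End FiniteFieldCurves.

Lemma Ecount_affine l a b : prime l ->
  Ecount l a b = #|affine_curve (a%:~R : 'F_l) b%:~R|.+1.
Proof.
move=> l_prime; have := card_projective_curve (a%:~R : 'F_l) b%:~R.
rewrite card_Fp // => E; rewrite /Ecount E mulKn //.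
by rewrite -subn1 subn_gt0 prime_gt1.
Qed.

Lemma Ecount_sym l a b : Ecount l a b = Ecount l b a.
Proof.
rewrite /Ecount; congr (_ %/ _)%N; apply: eq_card => v.
by rewrite !inE [X in _ * _ == X]mulrAC.
Qed.

(* Unlike [enum 'I_n.+1], which is locked, this list reduces under [vm_compute]. *)
Definition Zp_elements n : seq 'I_n.+1 := [seq inZp i | i <- iota 0 n.+1].

Lemma Zp_elements_uniq n : uniq (Zp_elements n).
Proof.
rewrite map_inj_in_uniq ?iota_uniq // => i j; rewrite !mem_iota !add0n => ilt jlt.
by move/(congr1 val) => /=; rewrite !modn_small.
Qed.

Lemma mem_Zp_elements n (x : 'I_n.+1) : x \in Zp_elements n.
Proof. by rewrite -[x]valZpK map_f // mem_iota ltn_ord. Qed.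

Lemma card_affine_curve_Fp l (A B : 'F_l) : #|affine_curve A B| =
  count (fun v => v.2 ^+ 2 == v.1 * (v.1 + A) * (v.1 + B))
    [seq (x, y) | x <- Zp_elements _, y <- Zp_elements _].
Proof. exact: card_affine_curve_enum (Zp_elements_uniq _) (@mem_Zp_elements _). Qed.

Lemma Fp_two_neq0 l : prime l -> odd l -> 2%:R != 0 :> 'F_l.
Proof.
move=> l_prime l_odd; rewrite -(dvdn_pcharf (pchar_Fp l_prime)) dvdn_prime2 //.
by apply: contraTneq l_odd => ->.
Qed.

Lemma Ecount_node l a b c : prime l -> odd l ->
  (a%:~R : 'F_l) = 0 -> (b%:~R : 'F_l) = c%:~R ->
  (legendre c l = 1 -> Ecount l a b = l) /\ (legendre c l = -1 -> Ecount l a b = (l + 2)%N).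
Proof.
move=> l_prime l_odd a0 bc; rewrite Ecount_affine // a0 bc /legendre.
case: eqP => [_|/eqP c_neq0]; first by split=> /eqP.
case: ifP => square; split=> // _.
  rewrite card_nodal_curve_square ?Fp_two_neq0 // card_Fp //.
  by rewrite prednK // prime_gt0.
by rewrite card_nodal_curve_nonsquare ?square // card_Fp // addn2.
Qed.

Lemma Ecount_cusp l a b : prime l ->
  (a%:~R : 'F_l) = 0 -> (b%:~R : 'F_l) = 0 -> Ecount l a b = l.+1.
Proof.
by move=> l_prime a0 b0; rewrite Ecount_affine // a0 b0 card_cuspidal_curve card_Fp.
Qed.

Lemma odd_prod_seq (s : seq nat) : all odd s -> odd (\prod_(x <- s) x).
Proof.
move=> /allP s_odd; rewrite big_seq.
by apply: (big_ind (fun n => odd n)) => // m n m_odd n_odd; rewrite oddM m_odd.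
Qed.

Section TwinPrimeCurve.

Variables (eps : int) (p D : nat).
Hypothesis eps_sign : eps = 1 \/ eps = -1.

Local Notation a := (eps * p%:Z * D%:Z).
Local Notation b := (eps * (p + 2)%:Z * D%:Z).

Lemma Ecount_twin_mod l : prime l ->
  Ecount l a b =
  Ecount l (eps * (p %% l)%:Z * (D %% l)%:Z) (eps * (p %% l + 2)%:Z * (D %% l)%:Z).
Proof. by move=> l_prime; rewrite /Ecount !intrM -!pmulrn !natrD !(Fp_nat_mod l_prime). Qed.

Lemma dvdn_twin_mod l : prime l ->
  (l %| p * (p + 2) * D)%N = (l %| (p %% l) * (p %% l + 2) * (D %% l))%N.
Proof.
move=> l_prime; rewrite !(dvdn_pcharf (pchar_Fp l_prime)).
by rewrite !natrM !natrD !(Fp_nat_mod l_prime).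
Qed.

Ltac case_lt :=
  let r := fresh "r" in
  case=> [|r]; [move=> _ | try by []; move: r; case_lt].

(* The point count is abstracted before the case split, so that each case
   evaluates it only once. *)
Ltac decide_by_residues l :=
  rewrite /atrace Ecount_twin_mod // dvdn_twin_mod //;
  case: eps_sign => ->;
  let n := fresh "n" in let En := fresh "En" in
  move En : (Ecount _ _ _) => n; move: n En;
  move: (ltn_pmod D (isT : 0 < l)%N); move: (D %% l)%N;
  move: (ltn_pmod p (isT : 0 < l)%N); move: (p %% l)%N;
  case_lt; case_lt;
  move=> n; rewrite Ecount_affine // card_affine_curve_Fp; vm_compute;
  move=> <-; vm_compute; intuition discriminate.

Lemma Ecount_twin3 : ~~ (3 %| p * (p + 2) * D)%N -> Ecount 3 a b = 4%N /\ atrace 3 a b = 0.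
Proof. by decide_by_residues 3%N. Qed.

Lemma Ecount_twin5 : ~~ (5 %| p * (p + 2) * D)%N ->
  ((p %% 5)%N \in [:: 1; 2]%N ->
     ((D %% 5)%N \in [:: 1; 4]%N -> Ecount 5 a b = 4%N /\ atrace 5 a b = 2) /\
     ((D %% 5)%N \in [:: 2; 3]%N -> Ecount 5 a b = 8%N /\ atrace 5 a b = -2)) /\
  ((p %% 5)%N = 4%N ->
     ((D %% 5)%N \in [:: 1; 4]%N -> Ecount 5 a b = 8%N /\ atrace 5 a b = -2) /\
     ((D %% 5)%N \in [:: 2; 3]%N -> Ecount 5 a b = 4%N /\ atrace 5 a b = 2)).
Proof. by decide_by_residues 5%N. Qed.

Lemma Ecount_twin7_supersingular : ~~ (7 %| p * (p + 2) * D)%N ->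
  (p %% 7)%N \in [:: 2; 3; 6]%N -> Ecount 7 a b = 8%N /\ atrace 7 a b = 0.
Proof. by decide_by_residues 7%N. Qed.

Lemma Ecount_twin7 : ~~ (7 %| p * (p + 2) * D)%N ->
  ((eps = 1 /\ (p %% 7)%N = 1%N) \/ (eps = -1 /\ (p %% 7)%N = 4%N) ->
     ((D %% 7)%N \in [:: 1; 2; 4]%N -> Ecount 7 a b = 12%N /\ atrace 7 a b = -4) /\
     ((D %% 7)%N \in [:: 3; 5; 6]%N -> Ecount 7 a b = 4%N /\ atrace 7 a b = 4)) /\
  ((eps = 1 /\ (p %% 7)%N = 4%N) \/ (eps = -1 /\ (p %% 7)%N = 1%N) ->
     ((D %% 7)%N \in [:: 1; 2; 4]%N -> Ecount 7 a b = 4%N /\ atrace 7 a b = 4) /\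
     ((D %% 7)%N \in [:: 3; 5; 6]%N -> Ecount 7 a b = 12%N /\ atrace 7 a b = -4)).
Proof. by decide_by_residues 7%N. Qed.

Lemma Ecount_twin2 : odd p -> odd D -> Ecount 2 a b = 3%N.
Proof.
move=> p_odd D_odd; rewrite Ecount_twin_mod // !modn2 p_odd D_odd.
by case: eps_sign => ->; rewrite Ecount_affine // card_affine_curve_Fp; vm_compute.
Qed.

Lemma Ecount_twin_divisor d : prime d -> (d %| D)%N -> Ecount d a b = d.+1.
Proof.
move=> d_prime dvd_dD; have D0 : D%:R = 0 :> 'F_d.
  by apply/eqP; rewrite -(dvdn_pcharf (pchar_Fp d_prime)).
by apply: Ecount_cusp; rewrite // !intrM -!pmulrn D0 mulr0.
Qed.

Lemma Ecount_twin_at_p : prime p -> odd p ->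
  (legendre (2 * eps * D%:Z) p = 1 -> Ecount p a b = p) /\
  (legendre (2 * eps * D%:Z) p = -1 -> Ecount p a b = (p + 2)%N).
Proof.
move=> p_prime p_odd; apply: Ecount_node; rewrite // !intrM -!pmulrn.
  by rewrite (pchar_Fp_0 p_prime) mulr0 mul0r.
by rewrite natrD (pchar_Fp_0 p_prime) add0r; ring.
Qed.

Lemma Ecount_twin_at_q : prime (p + 2) -> odd (p + 2) ->
  (legendre ((-2) * eps * D%:Z) (p + 2) = 1 -> Ecount (p + 2) a b = (p + 2)%N) /\
  (legendre ((-2) * eps * D%:Z) (p + 2) = -1 -> Ecount (p + 2) a b = (p + 2 + 2)%N).
Proof.
move=> q_prime q_odd; rewrite Ecount_sym; apply: Ecount_node => //.
  by rewrite !intrM -!pmulrn (pchar_Fp_0 q_prime) mulr0 mul0r.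
have pE : p%:R = - 2%:R :> 'F_(p + 2).
  by apply/eqP; rewrite -addr_eq0 -natrD (pchar_Fp_0 q_prime).
rewrite (_ : (-2 : int) = - 2%:Z) // !intrM intrN -!pmulrn pE; ring.
Qed.

End TwinPrimeCurve.

Theorem lemma2p3 (p q : nat) (eps : int) (Ds : seq nat) :
  prime p -> odd p -> prime q -> odd q -> q = (p + 2)%N ->
  (eps = 1 \/ eps = -1)%R ->
  all prime Ds -> all odd Ds -> uniq Ds ->
  let D := (\prod_(d <- Ds) d)%N in
  coprime (p * q) D ->
  let a := (eps * p%:Z * D%:Z)%R in
  let b := (eps * q%:Z * D%:Z)%R in
  (* (1) *)
  (~~ (3 %| p * q * D)%N -> Ecount 3 a b = 4%N /\ atrace 3 a b = 0%R) /\
  (* (2) *)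
  (~~ (7 %| p * q * D)%N -> (p %% 7)%N \in [:: 2; 3; 6]%N ->
     Ecount 7 a b = 8%N /\ atrace 7 a b = 0%R) /\
  (* (3) *)
  (~~ (5 %| p * q * D)%N ->
     ((p %% 5)%N \in [:: 1; 2]%N ->
        ((D %% 5)%N \in [:: 1; 4]%N -> Ecount 5 a b = 4%N /\ atrace 5 a b = 2%R) /\
        ((D %% 5)%N \in [:: 2; 3]%N -> Ecount 5 a b = 8%N /\ atrace 5 a b = (-2)%R)) /\
     ((p %% 5)%N = 4%N ->
        ((D %% 5)%N \in [:: 1; 4]%N -> Ecount 5 a b = 8%N /\ atrace 5 a b = (-2)%R) /\
        ((D %% 5)%N \in [:: 2; 3]%N -> Ecount 5 a b = 4%N /\ atrace 5 a b = 2%R))) /\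
  (* (4) *)
  (~~ (7 %| p * q * D)%N ->
     ((eps = 1%R /\ (p %% 7)%N = 1%N) \/ (eps = (-1)%R /\ (p %% 7)%N = 4%N) ->
        ((D %% 7)%N \in [:: 1; 2; 4]%N -> Ecount 7 a b = 12%N /\ atrace 7 a b = (-4)%R) /\
        ((D %% 7)%N \in [:: 3; 5; 6]%N -> Ecount 7 a b = 4%N /\ atrace 7 a b = 4%R)) /\
     ((eps = 1%R /\ (p %% 7)%N = 4%N) \/ (eps = (-1)%R /\ (p %% 7)%N = 1%N) ->
        ((D %% 7)%N \in [:: 1; 2; 4]%N -> Ecount 7 a b = 4%N /\ atrace 7 a b = 4%R) /\
        ((D %% 7)%N \in [:: 3; 5; 6]%N -> Ecount 7 a b = 12%N /\ atrace 7 a b = (-4)%R))) /\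
  (* (5) *)
  (Ecount 2 a b = 3%N /\
   (forall d, d \in Ds -> Ecount d a b = d.+1) /\
   (legendre (2 * eps * D%:Z)%R p = 1%R -> Ecount p a b = p) /\
   (legendre (2 * eps * D%:Z)%R p = (-1)%R -> Ecount p a b = (p + 2)%N) /\
   (legendre ((-2) * eps * D%:Z)%R q = 1%R -> Ecount q a b = q) /\
   (legendre ((-2) * eps * D%:Z)%R q = (-1)%R -> Ecount q a b = (q + 2)%N)).
Proof.
move=> p_prime p_odd q_prime q_odd qE eps_sign Ds_prime Ds_odd _ D _ a b.
subst q; have D_odd : odd D := odd_prod_seq Ds_odd.
split; first exact: Ecount_twin3 eps_sign.
split; first exact: Ecount_twin7_supersingular eps_sign.
split; first exact: Ecount_twin5 eps_sign.
split; first exact: Ecount_twin7 eps_sign.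
split; first exact: Ecount_twin2 eps_sign p_odd D_odd.
split.
  move=> d d_in; apply: Ecount_twin_divisor; first exact: (allP Ds_prime).
  by rewrite /D (big_rem d) //= dvdn_mulr.
have [] := Ecount_twin_at_p eps D p_prime p_odd.
by have [] := Ecount_twin_at_q eps D q_prime q_odd.
Qed.
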